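(* Let $R>1$ and $N\ge1$ with $RN$ an integer. For every encoding channel $\mathcal E$ from $RN$ qubits to $N$ qubits together with a classical register $M$, and every decoding channel $\mathcal D$ from the $N$ qubits and $M$ back to $RN$ qubits, \[ F_c\bigl(\mathcal D\circ(\mathcal I_2^{\otimes N}\otimes\mathcal I_M)\circ\mathcal E\bigr)\le 2^{-(R-1)N}, \] where $\mathcal I_2$ is the one-qubit identity channel; i.e. the strong converse parameter of $\mathcal I_2$ at rate $R$ satisfies $\gamma^Q(\mathcal I_2,R)=R-1>0$.
   Context: $\log$ base 2. For a channel $\Lambda$ on $m$ qubits, the channel fidelity is $F_c(\Lambda)=\langle\Phi|(\mathrm{id}\otimes\Lambda)(\Phi)|\Phi\rangle$ with $\Phi$ the maximally entangled state on $2^m\times2^m$ dimensions. A strong converse with parameter $\gamma^Q(\mathcal N,R)>0$ for a channel $\mathcal N$ at rate $R$ means that for all $N$ and all encodings $\mathcal E$ of $RN$ qubits into the input of $\mathcal N^{\otimes N}$ plus free forward classical communication $M$, and all decodings $\mathcal D$, $F_c(\mathcal D\circ(\mathcal N^{\otimes N}\otimes\mathcal I_M)\circ\mathcal E)\le2^{-\gamma^Q(\mathcal N,R)N}$. *)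

From HB Require Import structures.
From mathcomp Require Import all_boot all_order all_algebra.
From mathcomp Require Import reals.
From mathcomp Require Import complex.

Set Implicit Arguments.
Unset Strict Implicit.
Unset Printing Implicit Defensive.

Import Order.TTheory GRing.Theory Num.Theory.
Local Open Scope ring_scope.

Section Quantum.
Variable R : realType.
Local Notation C := (R[i]).

(* Linear operators |J> <I| with rows indexed by the finite type J and
   columns indexed by I (basis-indexed matrices). *)
Definition op (J I : finType) := J -> I -> C.

Definition opmul (K J I : finType) (A : op K J) (B : op J I) : op K I :=
  fun k i => \sum_(j : J) A k j * B j i.

Definition adj (J I : finType) (A : op J I) : op I J :=
  fun i j => (A j i)^*.

Definition idop (I : finType) : op I I := fun i j => (i == j)%:R.

Definition trace (I : finType) (A : op I I) : C := \sum_(i : I) A i i.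

Definition supop (I J : finType) := op I I -> op J J.

(* Quantum channel (CPTP map) from system I to system J: it admits a
   finite Kraus representation  rho |-> sum_k K_k rho K_k^dagger
   with  sum_k K_k^dagger K_k = 1. *)
Definition is_channel (I J : finType) (L : supop I J) : Prop :=
  exists Ks : seq (op J I),
    (forall i i', \sum_(K <- Ks) opmul (adj K) K i i' = @idop I i i') /\
    forall rho : op I I,
      forall j j', L rho j j' = \sum_(K <- Ks) opmul (opmul K rho) (adj K) j j'.

Definition tensor_id (A I J : finType) (L : supop I J) : supop (A * I)%type (A * J)%type :=
  fun rho p q =>
    L (fun x y => rho (p.1, x) (q.1, y)) p.2 q.2.

Definition id_chan (I : finType) : supop I I := fun rho => rho.

(* The identity channel on a classical register M: classical information is
   transmitted perfectly, i.e. the register is read in its computational basis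
   (complete dephasing). *)
Definition classical_id (M : finType) : supop M M :=
  fun rho i j => if i == j then rho i i else 0.

Definition tensor_chan (I1 J1 I2 J2 : finType) (L1 : supop I1 J1)
  (L2 : supop I2 J2) : supop (I1 * I2)%type (J1 * J2)%type :=
  fun rho p q =>
    L1 (fun a b =>
          L2 (fun x y => rho (a, x) (b, y)) p.2 q.2) p.1 q.1.

(* n-fold tensor power of the one-qubit identity channel, on the n-qubit
   system n.-tuple bool (identified with (C^2)^{(x) n}). *)
Definition qubits (n : nat) : finType := (n.-tuple bool)%type.

Definition id_qubits (n : nat) : supop (qubits n) (qubits n) := @id_chan _.

(* Maximally entangled state Phi = |Phi><Phi| on I * I, with
   |Phi> = d^{-1/2} sum_i |i>|i>,  d = #|I|. *)
Definition maxent (I : finType) : op (I * I)%type (I * I)%type :=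
  fun p q => ((p.1 == p.2) && (q.1 == q.2))%:R / #|I|%:R.

(* Channel fidelity  F_c(L) = <Phi| (id (x) L)(Phi) |Phi> = tr(Phi (id(x)L)(Phi)). *)
Definition chan_fid (I : finType) (L : supop I I) : C :=
  trace (opmul (@maxent I) (tensor_id L (@maxent I))).

End Quantum.

From HB Require Import structures.
From mathcomp Require Import all_boot all_order all_algebra.
From mathcomp Require Import reals complex.
From mathcomp Require Import ring.

Set Implicit Arguments.
Unset Strict Implicit.
Unset Printing Implicit Defensive.

Import Order.TTheory GRing.Theory Num.Theory.
Local Open Scope ring_scope.

(* Write D_r, E_s for Kraus operators of D and E, d = 2^k, and
   g_rs(j) = sum_b (D_r)_{b j} (E_s)_{j b} for j = (x, m).  Because the register
   m is dephased, the fidelity equals d^-2 sum_{r,s} sum_m |sum_x g_rs(x, m)|^2.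
   Cauchy-Schwarz bounds |sum_x g(x, m)|^2 by 2^N sum_x |g(x, m)|^2 and
   |g_rs(j)|^2 by (sum_b |(D_r)_{b j}|^2) (sum_b |(E_s)_{j b}|^2), and the
   completeness relations of the two Kraus families sum the latter to d.
   Hence the fidelity is at most 2^N d / d^2 = 2^-(k - N). *)

Lemma sumr_delta (T : pzRingType) (I : finType) (i : I) (F : I -> T) :
  \sum_j (i == j)%:R * F j = F i.
Proof.
rewrite (bigD1 i) //= eqxx mul1r big1 ?addr0 // => j /negbTE.
by rewrite eq_sym => ->; rewrite mul0r.
Qed.

Lemma sumr_pair (T : pzRingType) (I J : finType) (F : I * J -> T) :
  \sum_p F p = \sum_i \sum_j F (i, j).
Proof. by rewrite pair_bigA; apply: eq_bigr => -[]. Qed.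

Section CauchySchwarz.
Variable F : numDomainType.

Lemma cauchy_schwarz_ge0 (I : finType) (a b : I -> F) :
  (forall i, 0 <= a i) -> (forall i, 0 <= b i) ->
  (\sum_i a i * b i) ^+ 2 <= (\sum_i a i ^+ 2) * (\sum_i b i ^+ 2).
Proof.
move=> a0 b0.
(* Lagrange's identity: the gap is half a sum of squares. *)
have lagrange_ge0 : 0 <= \sum_i \sum_j (a i * b j - a j * b i) ^+ 2.
  apply: sumr_ge0 => i _; apply: sumr_ge0 => j _.
  have hr : a i * b j - a j * b i \is Num.real.
    by apply: rpredB; apply: rpredM; apply: ger0_real.
  by rewrite -real_normK // exprn_ge0.
set A := \sum_i a i ^+ 2; set B := \sum_i b i ^+ 2; set P := \sum_i a i * b i.
have AB : \sum_i \sum_j a i ^+ 2 * b j ^+ 2 = A * B by rewrite big_distrlr.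
have BA : \sum_i \sum_j a j ^+ 2 * b i ^+ 2 = A * B by rewrite exchange_big.
have PP : \sum_i \sum_j a i * b i * (a j * b j) = P ^+ 2 by rewrite expr2 big_distrlr.
have expand : \sum_i \sum_j (a i * b j - a j * b i) ^+ 2 =
  \sum_i \sum_j a i ^+ 2 * b j ^+ 2 + \sum_i \sum_j a j ^+ 2 * b i ^+ 2
   - (\sum_i \sum_j a i * b i * (a j * b j)) *+ 2.
  rewrite -sumrMnl -big_split -sumrB; apply: eq_bigr => i _.
  rewrite -sumrMnl -big_split -sumrB; apply: eq_bigr => j _.
  by rewrite mulr2n /=; ring.
move: lagrange_ge0.
by rewrite expand AB BA PP -mulr2n -mulrnBl pmulrn_lge0 // subr_ge0.
Qed.

Lemma cauchy_schwarz_norm (I : finType) (u v : I -> F) :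
  `|\sum_i u i * v i| ^+ 2 <= (\sum_i `|u i| ^+ 2) * (\sum_i `|v i| ^+ 2).
Proof.
have tri : `|\sum_i u i * v i| <= \sum_i `|u i| * `|v i|.
  by apply: le_trans (ler_norm_sum _ _ _) _; under eq_bigr do rewrite normrM.
apply: le_trans (@cauchy_schwarz_ge0 _ (fun i => `|u i|) (fun i => `|v i|) _ _).
- by rewrite !expr2 ler_pM.
- by move=> i; apply: normr_ge0.
- by move=> i; apply: normr_ge0.
Qed.

Lemma norm_sum_sqr_le (I : finType) (u : I -> F) :
  `|\sum_i u i| ^+ 2 <= #|I|%:R * \sum_i `|u i| ^+ 2.
Proof.
have := cauchy_schwarz_norm u (fun _ => 1).
under eq_bigr do rewrite mulr1.
under [X in _ <= _ * X -> _]eq_bigr do rewrite normr1 expr1n.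
by rewrite sumr_const mulrC.
Qed.

End CauchySchwarz.

Lemma block_diagonal_form_le (F : numClosedFieldType) (X M : finType)
    (g : X * M -> F) :
  \sum_j \sum_j' (j.2 == j'.2)%:R * (g j * (g j')^*)
    <= #|X|%:R * \sum_j `|g j| ^+ 2.
Proof.
have -> : \sum_j \sum_j' (j.2 == j'.2)%:R * (g j * (g j')^*) =
          \sum_m `|\sum_x g (x, m)| ^+ 2.
  rewrite sumr_pair exchange_big /=; apply: eq_bigr => m _.
  rewrite normCK rmorph_sum big_distrlr /=; apply: eq_bigr => x _.
  rewrite sumr_pair exchange_big /=.
  by under eq_bigr do rewrite -mulr_sumr; rewrite sumr_delta.
rewrite [X in _ <= _ * X]sumr_pair exchange_big mulr_sumr.
by apply: ler_sum => m _; exact: norm_sum_sqr_le.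
Qed.

Section KrausChannels.
Variable R : realType.
Local Notation C := (R[i]).

Definition kraus_rep (I J : finType) (L : supop R I J) (Ks : seq (op R J I)) :=
  forall rho j j', L rho j j' = \sum_(K <- Ks) opmul (opmul K rho) (adj K) j j'.

Definition kraus_complete (I J : finType) (Ks : seq (op R J I)) :=
  forall i i', \sum_(K <- Ks) opmul (adj K) K i i' = @idop R I i i'.

Definition kraus_overlap (I J : finType) (F : op R I J) (G : op R J I) (j : J) : C :=
  \sum_i F i j * G j i.

Lemma kraus_complete_norm (I J : finType) (Ks : seq (op R J I)) :
  kraus_complete Ks -> forall i, \sum_(K <- Ks) \sum_j `|K j i| ^+ 2 = 1.
Proof.
move=> complete i; have := complete i i; rewrite /idop eqxx /= => diag_one.
rewrite -[1]diag_one.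
by apply: eq_bigr => K _; apply: eq_bigr => j _; rewrite normCK mulrC.
Qed.

Lemma kraus_rep_unit (I J : finType) (L : supop R I J) (Ks : seq (op R J I))
    (a b : I) (c : C) :
  kraus_rep L Ks -> forall z z',
  L (fun x y => ((b == x) && (a == y))%:R * c) z z' =
  \sum_(K <- Ks) K z b * (K z' a)^* * c.
Proof.
move=> rep z z'; rewrite rep; apply: eq_bigr => K _; rewrite /opmul /adj.
rewrite (eq_bigr (fun i' => (a == i')%:R * (K z b * c * (K z' i')^*))).
  by rewrite sumr_delta /=; ring.
move=> i' _.
rewrite (eq_bigr (fun i => (b == i)%:R * (K z i * (a == i')%:R * c))).
  by rewrite sumr_delta /=; ring.
by move=> i _; rewrite -mulnb natrM /=; ring.
Qed.

Lemma chan_fidE (I : finType) (L : supop R I I) :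
  chan_fid L =
  \sum_a \sum_b L (fun x y => ((b == x) && (a == y))%:R / #|I|%:R) b a / #|I|%:R.
Proof.
rewrite /chan_fid /trace /opmul /maxent /tensor_id sumr_pair.
apply: eq_bigr => a _ /=.
pose Lba b := L (fun x y => ((b == x) && (a == y))%:R / #|I|%:R) b a / #|I|%:R.
rewrite (eq_bigr (fun a' => (a == a')%:R * \sum_b Lba b)) ?sumr_delta //.
move=> a' _; rewrite sumr_pair mulr_sumr; apply: eq_bigr => b _ /=.
rewrite (eq_bigr (fun b' => (b == b')%:R * ((a == a')%:R * Lba b))) ?sumr_delta //.
move=> b' _; rewrite -mulnb natrM.
case: (a =P a') => [<-|_]; last by rewrite !mul0r mulr0.
case: (b =P b') => [<-|_]; last by rewrite /= !(mul0r, mulr0).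
by rewrite !mul1r mulrC.
Qed.

Lemma tensor_id_classicalE (X M : finType)
    (rho : op R (X * M)%type (X * M)%type) j j' :
  tensor_chan (@id_chan R X) (@classical_id R M) rho j j' =
  (j.2 == j'.2)%:R * rho j j'.
Proof.
case: j j' => x m [x' m']; rewrite /tensor_chan /id_chan /classical_id /=.
by case: eqP => [->|_]; rewrite ?mul1r ?mul0r.
Qed.

End KrausChannels.

Section DephasedComposite.
Variables (R : realType) (A X M : finType).
Local Notation Y := (X * M)%type.
Local Notation dephase := (tensor_chan (@id_chan R X) (@classical_id R M)).
Variables (E : supop R A Y) (D : supop R Y A).
Variables (Es : seq (op R Y A)) (Ds : seq (op R A Y)).
Hypotheses (Erep : kraus_rep E Es) (Drep : kraus_rep D Ds).

Lemma chan_fid_dephasedE :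
  chan_fid (fun rho => D (dephase (E rho))) =
  (\sum_(Dk <- Ds) \sum_(Ek <- Es) \sum_j \sum_j'
     (j.2 == j'.2)%:R * (kraus_overlap Dk Ek j * (kraus_overlap Dk Ek j')^*))
  / #|A|%:R / #|A|%:R.
Proof.
rewrite chan_fidE; set d : R[i] := #|A|%:R.
pose T (a b : A) (Dk : op R A Y) (Ek : op R Y A) (j j' : Y) :=
  (j.2 == j'.2)%:R * (Dk b j * Ek j b) * ((Dk a j')^* * (Ek j' a)^*) / d / d.
have entry a b : D (dephase (E (fun x y => ((b == x) && (a == y))%:R / d))) b a / d =
    \sum_(Dk <- Ds) \sum_(Ek <- Es) \sum_j \sum_j' T a b Dk Ek j j'.
  rewrite Drep mulr_suml; apply: eq_bigr => Dk _; rewrite /opmul /adj mulr_suml.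
  under eq_bigr do rewrite !mulr_suml.
  rewrite exchange_big [RHS]exchange_big; apply: eq_bigr => j _.
  rewrite [RHS]exchange_big; apply: eq_bigr => j' _.
  rewrite tensor_id_classicalE (kraus_rep_unit _ _ _ Erep) !mulr_sumr !mulr_suml.
  by apply: eq_bigr => Ek _; rewrite /T; ring.
rewrite pair_bigA /=.
under eq_bigr do rewrite entry.
rewrite !mulr_suml exchange_big; apply: eq_bigr => Dk _.
rewrite !mulr_suml exchange_big; apply: eq_bigr => Ek _.
rewrite !mulr_suml exchange_big; apply: eq_bigr => j _.
rewrite !mulr_suml exchange_big; apply: eq_bigr => j' _.
rewrite /kraus_overlap rmorph_sum big_distrlr exchange_big pair_bigA !mulr_sumr !mulr_suml.
apply: eq_bigr => -[a b] _ /=.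
by rewrite /T rmorphM; ring.
Qed.

Hypotheses (Ecomplete : kraus_complete Es) (Dcomplete : kraus_complete Ds).

Lemma sum_kraus_overlap_sqr_le :
  \sum_(Dk <- Ds) \sum_(Ek <- Es) \sum_j `|kraus_overlap Dk Ek j| ^+ 2 <= #|A|%:R.
Proof.
apply: (@le_trans _ _ (\sum_(Dk <- Ds) \sum_(Ek <- Es) \sum_j
    (\sum_b `|Dk b j| ^+ 2) * (\sum_b `|Ek j b| ^+ 2))).
  do 3 apply: ler_sum => ? _; exact: cauchy_schwarz_norm.
under eq_bigr do rewrite exchange_big; rewrite exchange_big /=.
under eq_bigr do rewrite -big_distrlr /= (kraus_complete_norm Dcomplete) mul1r.
rewrite exchange_big; under eq_bigr do rewrite exchange_big; rewrite exchange_big /=.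
by under eq_bigr do rewrite (kraus_complete_norm Ecomplete); rewrite sumr_const.
Qed.

Lemma dephased_kraus_form_le :
  \sum_(Dk <- Ds) \sum_(Ek <- Es) \sum_j \sum_j'
     (j.2 == j'.2)%:R * (kraus_overlap Dk Ek j * (kraus_overlap Dk Ek j')^*)
  <= #|X|%:R * #|A|%:R.
Proof.
apply: (@le_trans _ _ (\sum_(Dk <- Ds) \sum_(Ek <- Es)
    #|X|%:R * \sum_j `|kraus_overlap Dk Ek j| ^+ 2)).
  do 2 apply: ler_sum => ? _; exact: block_diagonal_form_le.
under eq_bigr do rewrite -mulr_sumr; rewrite -mulr_sumr.
by rewrite ler_wpM2l ?ler0n // sum_kraus_overlap_sqr_le.
Qed.

End DephasedComposite.

Theorem chan_fid_dephased_le (R : realType) (A X M : finType)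
    (E : supop R A (X * M)%type) (D : supop R (X * M)%type A) :
  is_channel E -> is_channel D ->
  chan_fid (fun rho => D (tensor_chan (@id_chan R X) (@classical_id R M) (E rho)))
    <= #|X|%:R / #|A|%:R.
Proof.
move=> [Es [Ecomplete Erep]] [Ds [Dcomplete Drep]].
rewrite (chan_fid_dephasedE Erep Drep).
have [-> | Apos] := posnP #|A|; first by rewrite invr0 !mulr0.
have dpos : 0 < #|A|%:R :> R[i] by rewrite ltr0n.
apply: le_trans (_ : #|X|%:R * #|A|%:R / #|A|%:R / #|A|%:R <= _).
  by rewrite !ler_pM2r ?invr_gt0 // (dephased_kraus_form_le Ecomplete Dcomplete).
by rewrite mulfK ?gt_eqF.
Qed.

Theorem lemma16 (R : realType) (N k : nat) (M : finType)
  (E : supop R (qubits k) (qubits N * M)%type)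
  (D : supop R (qubits N * M)%type (qubits k)) :
  (1 <= N)%N -> (N < k)%N ->
  is_channel E -> is_channel D ->
  chan_fid (fun rho => D (tensor_chan (@id_qubits R N) (@classical_id R M) (E rho)))
    <= (2%:R ^- (k - N) : R[i]).
Proof.
move=> _ ltNk Echan Dchan.
apply: le_trans (chan_fid_dephased_le Echan Dchan) _.
by rewrite /qubits !card_tuple card_bool !natrX expfB // invf_div.
Qed.
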